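(* Let $n \ge 1$ and let $G$ be a (nonempty) subgraph of the hypercube $Q_n$ with average degree $d$. Then $G$ contains a geodesic of length at least $d$.
   Context: The hypercube $Q_n$ has vertex set $\{0,1\}^n$, two vertices being adjacent iff they differ in exactly one coordinate; the direction of an edge is that coordinate. A path in $Q_n$ is a geodesic if no two of its edges have the same direction. The length of a path is its number of edges. The average degree of $G$ is $2|E(G)|/|V(G)|$. *)

From mathcomp Require Import all_boot all_order all_algebra.
Set Implicit Arguments. Unset Strict Implicit. Unset Printing Implicit Defensive.
Import GRing.Theory Num.Theory.

Definition cube (n : nat) := {ffun 'I_n -> bool}.

Definition cube_adj n (u v : cube n) : bool :=
  #|[set i : 'I_n | u i != v i]| == 1%N.

Definition direction n (u v : cube n) : {set 'I_n} := [set i : 'I_n | u i != v i].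

Definition is_subgraph n (V : {set cube n}) (E : {set {set cube n}}) : Prop :=
  forall e, e \in E -> exists u v, [/\ e = [set u; v], cube_adj u v,
                                       u \in V & v \in V].

Definition pnth n (p : seq (cube n)) (i : nat) : cube n :=
  nth [ffun=> false] p i.

Definition is_path n (V : {set cube n}) (E : {set {set cube n}})
    (p : seq (cube n)) : Prop :=
  [/\ p != [::], uniq p, all (fun x => x \in V) p &
      forall i, (i.+1 < size p)%N ->
        [set pnth p i; pnth p i.+1] \in E].

Definition path_length n (p : seq (cube n)) : nat := (size p).-1.

Definition is_geodesic n (p : seq (cube n)) : Prop :=
  forall i j, (i < j)%N -> (j.+1 < size p)%N ->
    direction (pnth p i) (pnth p i.+1)
      != direction (pnth p j) (pnth p j.+1).

Definition average_degree n (V : {set cube n}) (E : {set {set cube n}}) : rat :=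
  (2 * #|E|)%:R / #|V|%:R.

From mathcomp Require Import all_boot all_order all_algebra.
Import GRing.Theory Num.Theory.
Set Implicit Arguments. Unset Strict Implicit. Unset Printing Implicit Defensive.

(* Induction on k: from every vertex v there is a geodesic of length f_k(v)
   inside the subcube of v spanned by the first k directions, where
   sum_v f_k(v) >= sum_v deg_k(v) and deg_k(v) counts the edges at v with
   direction < k.  To pass to k+1, a vertex v whose edge in direction k is
   present prepends that edge to the geodesic of its neighbour, which never
   uses direction k; this adds one to f for both ends of each such edge.  For
   k = n the degree sum is 2|E|, so the longest of these geodesics has length
   at least the average degree. *)

Definition flip n (i : 'I_n) (v : cube n) : cube n :=
  [ffun j => if j == i then ~~ v j else v j].

Lemma flipK n (i : 'I_n) : involutive (flip i).
Proof. by move=> v; apply/ffunP => j; rewrite !ffunE; case: eqP; rewrite ?negbK. Qed.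

Lemma flip_neq n (i : 'I_n) (v : cube n) : flip i v != v.
Proof. by apply/eqP => /ffunP /(_ i); rewrite ffunE eqxx; case: (v i). Qed.

Lemma direction_flip n (i : 'I_n) (v : cube n) : direction v (flip i v) = [set i].
Proof.
apply/setP => j; rewrite !inE ffunE.
by case: (j =P i) => [->|]; [case: (v i) | rewrite eqxx].
Qed.

Lemma cube_adj_flip n (u v : cube n) : cube_adj u v -> exists i, v = flip i u.
Proof.
move=> /cards1P [i Di]; exists i; apply/ffunP => j; rewrite ffunE.
have := Di; move/setP/(_ j); rewrite !inE.
by case: (j == i); case: (u j); case: (v j).
Qed.

Lemma big_involution_on (R : Type) (idx : R) (op : Monoid.com_law idx)
    (T : finType) (g : T -> T) (P : pred T) (F : T -> R) :
  involutive g -> {homo g : x / P x} ->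
  \big[op/idx]_(x | P x) F (g x) = \big[op/idx]_(x | P x) F x.
Proof.
move=> gK gP; rewrite (reindex_inj (inv_inj gK)) /=.
by apply: eq_big => [x|x _]; rewrite ?gK //; apply/idP/idP => /gP; rewrite ?gK.
Qed.

Section Subgraph.

Variables (n : nat) (V : {set cube n}) (E : {set {set cube n}}).
Hypothesis subVE : is_subgraph V E.

Lemma edge_vertices u w : [set u; w] \in E -> u \in V /\ w \in V.
Proof.
move=> /subVE [a [b [Duw _ aV bV]]].
have inab x : x \in [set u; w] -> x \in V by rewrite Duw => /set2P [] ->.
by split; apply: inab; rewrite !inE eqxx ?orbT.
Qed.

Definition flip_edge (i : 'I_n) (v : cube n) : bool := [set v; flip i v] \in E.

Lemma flip_edgeK i v : flip_edge i (flip i v) = flip_edge i v.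
Proof. by rewrite /flip_edge flipK setUC. Qed.

Definition low_degree k (v : cube n) : nat := \sum_(i < n | i < k) flip_edge i v.

Lemma low_degree0 v : low_degree 0 v = 0.
Proof. by rewrite /low_degree big_pred0. Qed.

Lemma low_degreeS k (kn : k < n) v :
  low_degree k.+1 v = low_degree k v + flip_edge (Ordinal kn) v.
Proof.
rewrite /low_degree (bigD1 (Ordinal kn)) //= addnC; congr (_ + _).
by apply: eq_bigl => i; rewrite ltnS -val_eqE /= ltn_neqAle andbC.
Qed.

Lemma handshake : 2 * #|E| <= \sum_(v in V) low_degree n v.
Proof.
have flip_edgeE i v :
    flip_edge i v = \sum_(e in E) (e == [set v; flip i v]) :> nat.
  rewrite /flip_edge; have [sE | sNE] := boolP (_ \in E).
    by rewrite (bigD1 _ sE) /= eqxx big1 // => e /andP [_ /negbTE ->].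
  by rewrite big1 // => e eE; case: eqP => // eD; rewrite -eD eE in sNE.
have -> : \sum_(v in V) low_degree n v =
          \sum_(e in E) \sum_(v in V) \sum_(i < n) (e == [set v; flip i v]).
  rewrite [RHS]exchange_big; apply: eq_bigr => v _; rewrite [RHS]exchange_big.
  by apply: eq_big => [i|i _]; [exact: ltn_ord | exact: flip_edgeE].
rewrite mulnC -sum_nat_const; apply: leq_sum => e.
move=> /subVE [a [b [-> /cube_adj_flip [i ->] aV bV]]].
rewrite (bigD1 a) // (bigD1 (flip i a)) /=; last by rewrite bV flip_neq.
rewrite (bigD1 i) // [X in _ + (X + _)](bigD1 i) //= flipK setUC eqxx.
by apply: (@leq_add 1 1); [exact: leq_addr | rewrite -addnA; exact: leq_addr].
Qed.

Definition subcube_geodesic k (v : cube n) (q : seq (cube n)) : Prop :=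
  [/\ is_path V E (v :: q), is_geodesic (v :: q) &
      forall x, x \in v :: q -> forall j : 'I_n, k <= j -> x j = v j].

Lemma subcube_geodesic_nil k v : v \in V -> subcube_geodesic k v [::].
Proof.
move=> vV; split; first by split; rewrite /= ?vV //; case.
  by move=> i [].
by move=> x; rewrite inE => /eqP ->.
Qed.

Lemma subcube_geodesicS k v q :
  subcube_geodesic k v q -> subcube_geodesic k.+1 v q.
Proof. by case=> pq gq sub; split => // x xq j /ltnW; apply: sub. Qed.

Lemma subcube_geodesic_cons k (kn : k < n) v q (i := Ordinal kn) :
  flip_edge i v -> subcube_geodesic k (flip i v) q ->
  subcube_geodesic k.+1 v (flip i v :: q).
Proof.
move=> vE [[_ uq qV qE] gq sub].
have flipped x : x \in flip i v :: q -> x i = ~~ v i.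
  by move=> xq; rewrite (sub x xq i (leqnn k)) ffunE eqxx.
split; first split.
- by [].
- by rewrite cons_uniq uq andbT; apply/negP => /flipped; case: (v i).
- by apply/andP; split; first case: (edge_vertices vE).
- by case=> [|m] // /qE.
- case=> [|a] [|b] //; first last.
    by rewrite ltnS => ab bq; exact: (gq a b ab bq).
  rewrite /pnth /= => _; rewrite ltnS => bq; rewrite direction_flip; apply/eqP => Di.
  have qb c : c <= b.+1 -> nth [ffun=> false] (flip i v :: q) c \in flip i v :: q.
    by move=> cb; apply: mem_nth; exact: leq_ltn_trans cb bq.
  have : i \in direction (nth [ffun=> false] (flip i v :: q) b)
                         (nth [ffun=> false] (flip i v :: q) b.+1).
    by rewrite -Di set11.
  by rewrite inE (flipped _ (qb b _)) // (flipped _ (qb b.+1 _)) // eqxx.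
- move=> x; rewrite inE => /predU1P [-> // | xq] j kj.
  rewrite (sub x xq j (ltnW kj)) ffunE.
  by case: eqP => // ji; rewrite ji ltnn in kj.
Qed.

Definition geodesic_lengths k (f : cube n -> nat) : Prop :=
  forall v, v \in V -> exists q, subcube_geodesic k v q /\ size q = f v.

Definition extend_lengths (i : 'I_n) (f : cube n -> nat) (v : cube n) : nat :=
  if flip_edge i v then (f (flip i v)).+1 else f v.

Lemma geodesic_lengths_extend k (kn : k < n) f :
  geodesic_lengths k f -> geodesic_lengths k.+1 (extend_lengths (Ordinal kn) f).
Proof.
move=> fk v vV; rewrite /extend_lengths; case: ifP => vE.
  have [_ fvV] := edge_vertices vE; have [q [qv <-]] := fk _ fvV.
  by exists (flip (Ordinal kn) v :: q); split; first exact: subcube_geodesic_cons.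
by have [q [qv <-]] := fk _ vV; exists q; split; first exact: subcube_geodesicS.
Qed.

Lemma sum_extend_lengths i f :
  \sum_(v in V) extend_lengths i f v =
  \sum_(v in V) f v + \sum_(v in V) flip_edge i v.
Proof.
transitivity (\sum_(v in V) (flip_edge i v +
                            (if flip_edge i v then f (flip i v) else f v))).
  by apply: eq_bigr => v _; rewrite /extend_lengths; case: flip_edge.
rewrite big_split addnC /=; congr (_ + _).
rewrite (bigID (flip_edge i)) [RHS](bigID (flip_edge i)) /=; congr (_ + _).
  rewrite (eq_bigr (f \o flip i)) => [|v /andP [_ ->] //].
  apply: big_involution_on (flipK i) _ => v /andP [_ vE].
  by rewrite flip_edgeK vE andbT; case: (edge_vertices vE).
by apply: eq_bigr => v /andP [_ /negbTE ->].
Qed.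

Lemma geodesic_lengths_exist k : k <= n ->
  exists f, geodesic_lengths k f /\
            \sum_(v in V) low_degree k v <= \sum_(v in V) f v.
Proof.
elim: k => [_ | k IH kn].
  exists (fun=> 0); split; last by rewrite big1 // => v _; exact: low_degree0.
  by move=> v vV; exists [::]; split; first exact: subcube_geodesic_nil.
have [f [fk sum_f]] := IH (ltnW kn).
exists (extend_lengths (Ordinal kn) f); split; first exact: geodesic_lengths_extend.
rewrite sum_extend_lengths (eq_bigr _ (fun v _ => low_degreeS kn v)) big_split.
by rewrite leq_add2r.
Qed.

End Subgraph.

Theorem theorem2 (n : nat) (V : {set cube n}) (E : {set {set cube n}}) :
  (1 <= n)%N -> V != set0 -> is_subgraph V E ->
  exists p : seq (cube n),
    [/\ is_path V E p, is_geodesic p &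
        average_degree V E <= (path_length p)%:R :> rat]%R.
Proof.
move=> _ V0 subVE; have [v0 v0V] := set0Pn V V0.
have [f [fn sum_f]] := geodesic_lengths_exist subVE (leqnn n).
have [v vV fmax] := @arg_maxnP _ v0 [in V] f v0V.
have [q [[pq gq _] qv]] := fn v vV.
exists (v :: q); split => //.
have sum_f_le : \sum_(u in V) f u <= f v * #|V|.
  by rewrite mulnC -sum_nat_const; apply: leq_sum.
rewrite /average_degree /path_length /= qv ler_pdivrMr ?ltr0n ?card_gt0 //.
rewrite -natrM ler_nat.
exact: leq_trans (handshake subVE) (leq_trans sum_f sum_f_le).
Qed.
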